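(* Let $\mathbf{k}_1,\mathbf{k}_2,\ldots\in\mathbb{R}^{d_k}$, $\mathbf{v}_1,\mathbf{v}_2,\ldots\in\mathbb{R}^{d_v}$, and nonzero scalars $\alpha_s,\beta_s,\gamma_s$. Let $\mathbf{S}_0=\mathbf{0}\in\mathbb{R}^{d_v\times d_k}$ and $$\mathbf{S}_s=\mathbf{S}_{s-1}(\alpha_s\mathbf{I}-\beta_s\mathbf{k}_s\mathbf{k}_s^\top)+\gamma_s\mathbf{v}_s\mathbf{k}_s^\top,\quad s\ge1.$$ Then for every $t\ge1$, $\operatorname{row}\mathbf{S}_t\subseteq\operatorname{span}\langle\mathbf{k}_1,\ldots,\mathbf{k}_t\rangle$ and $\operatorname{col}\mathbf{S}_t\subseteq\operatorname{span}\langle\mathbf{v}_1,\ldots,\mathbf{v}_t\rangle$. Consequently $\operatorname{rank}\mathbf{S}_t\le\min(\operatorname{rank}\mathbf{K}_t,\operatorname{rank}\mathbf{V}_t)$, where $\mathbf{K}_t=(\mathbf{k}_1,\ldots,\mathbf{k}_t)$ and $\mathbf{V}_t=(\mathbf{v}_1,\ldots,\mathbf{v}_t)$.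
   Context: $\operatorname{row}$ and $\operatorname{col}$ denote the row space (a subspace of $\mathbb{R}^{d_k}$) and column space (a subspace of $\mathbb{R}^{d_v}$) of a $d_v\times d_k$ matrix. *)

From HB Require Import structures.
From mathcomp Require Import all_boot all_order all_algebra.
Set Implicit Arguments. Unset Strict Implicit. Unset Printing Implicit Defensive.
Import Order.TTheory GRing.Theory Num.Theory.
Local Open Scope ring_scope.

Fixpoint Sstate (R : nzRingType) (dk dv : nat)
  (k : nat -> 'cV[R]_dk) (v : nat -> 'cV[R]_dv) (alpha beta gamma : nat -> R)
  (s : nat) : 'M[R]_(dv, dk) :=
  match s with
  | 0 => 0
  | s'.+1 =>
      Sstate k v alpha beta gamma s' *m
        ((alpha s'.+1)%:M - beta s'.+1 *: (k s'.+1 *m (k s'.+1)^T))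
      + gamma s'.+1 *: (v s'.+1 *m (k s'.+1)^T)
  end.

(* K_t = (k_1, ..., k_t) : the dk x t matrix whose j-th column is k_{j+1}. *)
Definition colsmx (R : nzRingType) (d t : nat) (k : nat -> 'cV[R]_d) : 'M[R]_(d, t) :=
  \matrix_(i < d, j < t) k j.+1 i 0.

From HB Require Import structures.
From mathcomp Require Import all_boot all_order all_algebra.
Import Order.TTheory GRing.Theory Num.Theory.
Local Open Scope ring_scope.

(* Since S (a I - b k k^T) = a S - b (S k) k^T, the rows of the new
   state stay in the span of the old rows and k^T; right multiplication never
   enlarges the column space, and v k^T only contributes v. *)

Section Subspaces.

Context {R : fieldType}.

Lemma row_trcolsmx {d t} (k : nat -> 'cV[R]_d) (i : 'I_t) :
  row i (colsmx t k)^T = (k i.+1)^T.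
Proof. by apply/rowP => j; rewrite !mxE. Qed.

Lemma trcolsmx_sub {d t} (k : nat -> 'cV[R]_d) s :
  (0 < s)%N -> (s <= t)%N -> ((k s)^T <= (colsmx t k)^T)%MS.
Proof.
move=> s_gt0 s_le_t; have lt_s1_t : (s.-1 < t)%N by rewrite prednK.
by rewrite -[s](prednK s_gt0) -(row_trcolsmx k (Ordinal lt_s1_t)) row_sub.
Qed.

Lemma trcolsmxS {d} t (k : nat -> 'cV[R]_d) :
  ((colsmx t k)^T <= (colsmx t.+1 k)^T)%MS.
Proof.
by apply/row_subP => i; rewrite row_trcolsmx trcolsmx_sub // ltnS ltnW.
Qed.

Lemma rank1_update_sub {m n p} (A : 'M[R]_(m, n)) (x : 'cV_n) a b
    (B : 'M_(p, n)) :
  (A <= B)%MS -> (x^T <= B)%MS -> (A *m (a%:M - b *: (x *m x^T)) <= B)%MS.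
Proof.
move=> sAB sxB; rewrite mulmxBr mul_mx_scalar -scalemxAr mulmxA.
rewrite addmx_sub ?scalemx_sub //.
by rewrite -scaleNr scalemx_sub // (submx_trans (submxMl _ _)).
Qed.

Lemma Sstate_row_sub {dk dv} (k : nat -> 'cV[R]_dk) (v : nat -> 'cV[R]_dv)
    (alpha beta gamma : nat -> R) t :
  (Sstate k v alpha beta gamma t <= (colsmx t k)^T)%MS.
Proof.
elim: t => [|t IH] /=; first exact: sub0mx.
have sk : ((k t.+1)^T <= (colsmx t.+1 k)^T)%MS by exact: trcolsmx_sub.
rewrite addmx_sub ?rank1_update_sub ?(submx_trans IH) ?trcolsmxS //.
by rewrite scalemx_sub // (submx_trans (submxMl _ _)).
Qed.

Lemma Sstate_col_sub {dk dv} (k : nat -> 'cV[R]_dk) (v : nat -> 'cV[R]_dv)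
    (alpha beta gamma : nat -> R) t :
  ((Sstate k v alpha beta gamma t)^T <= (colsmx t v)^T)%MS.
Proof.
elim: t => [|t IH] /=; first by rewrite trmx0 sub0mx.
rewrite linearD /= trmx_mul !linearZ /= trmx_mul trmxK.
rewrite addmx_sub ?scalemx_sub ?(submx_trans (submxMl _ _)) //.
  exact: submx_trans IH (trcolsmxS _ _).
exact: trcolsmx_sub.
Qed.

Lemma mxrank_le_min_sub {m n p q} (A : 'M[R]_(m, n)) (B : 'M_(p, n))
    (C : 'M_(q, m)) :
  (A <= B)%MS -> (A^T <= C)%MS -> (\rank A <= minn (\rank B) (\rank C))%N.
Proof.
move=> sAB sAtC; rewrite leq_min mxrankS //=.
by rewrite -mxrank_tr mxrankS.
Qed.

End Subspaces.

Theorem propositionF1 (R : realFieldType) (dk dv : nat)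
  (k : nat -> 'cV[R]_dk) (v : nat -> 'cV[R]_dv) (alpha beta gamma : nat -> R) :
  (forall s, (0 < s)%N -> [/\ alpha s != 0, beta s != 0 & gamma s != 0]) ->
  forall t : nat, (1 <= t)%N ->
    [/\ (Sstate k v alpha beta gamma t <= (colsmx t k)^T)%MS,
        ((Sstate k v alpha beta gamma t)^T <= (colsmx t v)^T)%MS
      & (\rank (Sstate k v alpha beta gamma t)
           <= minn (\rank (colsmx t k)) (\rank (colsmx t v)))%N].
Proof.
move=> _ t _.
have sub_K := Sstate_row_sub k v alpha beta gamma t.
have sub_V := Sstate_col_sub k v alpha beta gamma t.
split=> //.
rewrite -[\rank (colsmx t k)]mxrank_tr -[\rank (colsmx t v)]mxrank_tr.
exact: mxrank_le_min_sub.
Qed.
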